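(* The lattice of characteristic subgroups of a finite abelian group $G$ is a chain if and only if $G\cong Z_{p^k}^{\mu_1}\times Z_{p^{k+1}}^{\mu_2}$ for some integers $k,\mu_1,\mu_2\ge 0$ and some prime $p$.
   Context: $Z_{p^a}^{\mu}$ denotes the direct product of $\mu$ copies of the cyclic group of order $p^a$. A lattice is a chain if any two of its elements are comparable. *)

From mathcomp Require Import all_boot all_fingroup all_algebra all_solvable.
Set Implicit Arguments. Unset Strict Implicit. Unset Printing Implicit Defensive.

(* Z_n (n > 0) is modelled by 'I_(n.-1.+1), whose canonical finGroupType law
   is addition mod n. *)
(* Z_{p^k}^{mu1} x Z_{p^(k+1)}^{mu2}, realised as pairs of row vectors
   with componentwise (additive) group law. *)
Definition ZZtype (p k mu1 mu2 : nat) : finGroupType :=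
  ('rV['I_(p ^ k).-1.+1]_mu1 * 'rV['I_(p ^ k.+1).-1.+1]_mu2)%type.

Definition char_chain (gT : finGroupType) (G : {group gT}) : Prop :=
  forall H K : {group gT}, (H \char G)%g -> (K \char G)%g ->
    ((H \subset K) || (K \subset H))%g.

From mathcomp Require Import all_boot all_fingroup all_algebra all_solvable.
From mathcomp Require Import zify.

Set Implicit Arguments.
Unset Strict Implicit.
Unset Printing Implicit Defensive.

(* Characteristic subgroups are invariant under the transvections x |-> x y of
   an abelian group G = <[x]> \x K, for y in K with #[y] dividing #[x].  When G
   has a basis of cyclic factors of orders p ^ k and p ^ k.+1, these
   automorphisms show that a characteristic subgroup contains the components of
   its elements, and that the powers of basis elements it contains move together
   across factors of equal order and differ by at most one p-th power across
   factors of different orders; two such subgroups are therefore comparable.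
   Conversely, if the characteristic subgroups form a chain then comparing
   'O_p(G) with 'O_q(G) shows that G is a p-group, and comparing
   'Ohm_(e - 2)(G) with 'Mho^1(G), where p ^ e is the exponent, shows that a
   generator of a cyclic direct factor, which is never a p-th power, has order
   at least p ^ e.-1. *)

Local Open Scope group_scope.

Lemma prodg_commD1 (gT : finGroupType) (I : finType) (c : I -> gT) i :
  (forall j l, commute (c j) (c l)) -> \prod_j c j = c i * \prod_(j | j != i) c j.
Proof.
move=> cc; move: (mem_index_enum i) (index_enum_uniq I).
elim: (index_enum I) => //= a r IH; rewrite inE => /predU1P[<- | ri] /andP[ar ur].
  rewrite !big_cons eqxx /= [in RHS]big_seq_cond big_seq; apply: congr1; apply: eq_bigl => j.
  by case: (boolP (j \in r)) => //= jr; apply/esym; apply: contraNneq ar => <-.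
rewrite !big_cons (IH ri ur); case: eqVneq => [ai | _]; first by rewrite ai ri in ar.
by rewrite !mulgA cc.
Qed.

Section CyclePowers.

Variable gT : finGroupType.
Implicit Types x y : gT.

Lemma expg_in_cycleX x c d : gcdn d #[x] %| c -> x ^+ c \in <[x ^+ d]>.
Proof.
move=> dv_c; set g := gcdn d #[x].
have <- : <[x ^+ g]> = <[x ^+ d]>.
  apply/eqP; rewrite eq_sym eqEcard -!orderE !orderXgcd (gcdn_idPr (dvdn_gcdr _ _)).
  by rewrite gcdnC leqnn andbT cycle_subG -(divnK (dvdn_gcdl d #[x])) mulnC expgM mem_cycle.
by rewrite -(divnK dv_c) mulnC expgM mem_cycle.
Qed.

Lemma dvdn_pfactor_total p b m n :
  prime p -> m %| p ^ b -> n %| p ^ b -> (m %| n) || (n %| m).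
Proof.
move=> pr_p /(dvdn_pfactor _ _ pr_p)[i _ ->] /(dvdn_pfactor _ _ pr_p)[j _ ->].
by rewrite !dvdn_Pexp2l ?prime_gt1 // leq_total.
Qed.

Lemma cycleX_total x y p a c d : prime p -> #[x] = (p ^ a)%N -> #[y] = (p ^ a)%N ->
  (x ^+ c \in <[x ^+ d]>) || (y ^+ d \in <[y ^+ c]>).
Proof.
move=> pr_p ox oy.
case/orP: (dvdn_pfactor_total pr_p (dvdn_gcdr d (p ^ a)) (dvdn_gcdr c (p ^ a))).
  by move=> dv; rewrite expg_in_cycleX // ox (dvdn_trans dv) ?dvdn_gcdl.
by move=> dv; rewrite orbC expg_in_cycleX // oy (dvdn_trans dv) ?dvdn_gcdl.
Qed.

Lemma cycleX_cross x y p k c d : prime p -> #[x] = (p ^ k)%N -> #[y] = (p ^ k.+1)%N ->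
  (x ^+ c \in <[x ^+ d]>) || (y ^+ d \in <[y ^+ (p * c)]>).
Proof.
move=> pr_p ox oy; have [dv | ndv] := boolP (gcdn d (p ^ k) %| gcdn c (p ^ k)).
  by rewrite expg_in_cycleX // ox (dvdn_trans dv) ?dvdn_gcdl.
rewrite orbC expg_in_cycleX // oy expnS -muln_gcdr.
have /(dvdn_pfactor _ _ pr_p)[i _ ei] := dvdn_gcdr c (p ^ k).
have /(dvdn_pfactor _ _ pr_p)[j _ ej] := dvdn_gcdr d (p ^ k).
rewrite ei ej dvdn_Pexp2l ?prime_gt1 // -ltnNge in ndv.
rewrite (dvdn_trans _ (dvdn_gcdl d (p ^ k))) // ei ej -expnS.
by rewrite dvdn_Pexp2l ?prime_gt1.
Qed.

Lemma cycle_subG_mem (A : {group gT}) x y : x \in A -> y \in <[x]> -> y \in A.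
Proof. by move=> Ax; apply: subsetP; rewrite cycle_subG. Qed.

Lemma order_expg_pS y p k : prime p -> #[y] = (p ^ k.+1)%N -> #[y ^+ p] = (p ^ k)%N.
Proof.
by move=> pr_p oy; rewrite orderXdiv oy ?expnS ?dvdn_mulr // mulKn ?prime_gt0.
Qed.

End CyclePowers.

(** * Transvections *)

Section Transvection.

Variables (gT : finGroupType) (G K : {group gT}) (x y : gT).
Hypotheses (cGG : abelian G) (defG : <[x]> \x K = G).
Hypotheses (Ky : y \in K) (dv_yx : #[y] %| #[x]).

Let sKG : K \subset G. Proof. by have [_ /mulG_sub[]] := dprodP defG. Qed.
Let Gx : x \in G. Proof. by rewrite -cycle_subG; have [_ /mulG_sub[]] := dprodP defG. Qed.
Let Gy : y \in G. Proof. exact: subsetP sKG y Ky. Qed.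
Let cxy : commute x y. Proof. exact: centsP cGG x Gx y Gy. Qed.

Lemma transvection_aut :
  exists f : {morphism G >-> gT}, [/\ 'injm f, f @* G = G,
    forall c, f (x ^+ c) = (x * y) ^+ c & {in K, forall z, f z = z}].
Proof.
have [_ defxK _ _] := dprodP defG.
have dv_xy : #[x * y] %| #[x].
  by rewrite order_dvdn expgMn // expg_order mul1g -order_dvdn.
have cfK : idm K @* K \subset 'C(eltm dv_xy @* <[x]>).
  rewrite morphim_idm // im_eltm (sub_abelian_cent2 cGG) // cycle_subG.
  exact: groupM.
pose f := dprodm_morphism defG cfK.
have fx c : f (x ^+ c) = (x * y) ^+ c.
  by rewrite [f _]dprodmEl ?mem_cycle //; apply: eltmE.
have fK : {in K, forall z, f z = z} by move=> z Kz; rewrite [f _]dprodmEr.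
have sGfG : G \subset f @* G.
  rewrite -{1}defxK mul_subG //; last first.
    by apply/subsetP=> z Kz; rewrite -(fK z Kz) mem_morphim // (subsetP sKG).
  have -> : x = f x * (f y)^-1 by rewrite -{2}(expg1 x) fx fK // expg1 mulgK.
  by rewrite cycle_subG groupM ?groupV ?mem_morphim.
have imfG : f @* G = G by apply/eqP; rewrite eq_sym eqEcard sGfG leq_morphim.
by exists f; split; rewrite // -card_im_injm imfG.
Qed.

Lemma char_transvection (H : {group gT}) c k :
  H \char G -> k \in K -> x ^+ c * k \in H -> y ^+ c \in H.
Proof.
move=> chH Kk Hxk; have [f [injf imfG fx fK]] := transvection_aut.
have [_ /(_ f injf imfG) fH] := charP _ _ chH.
have Gxc : x ^+ c \in G by rewrite groupX.
have : f (x ^+ c * k) \in H by rewrite -fH mem_morphim // groupM // (subsetP sKG).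
rewrite morphM // ?(subsetP sKG) // fx fK // expgMn // => Hxyk.
have -> : y ^+ c = x ^+ c * y ^+ c * k * (x ^+ c * k)^-1.
  by rewrite (commuteX2 c c cxy) -(mulgA (y ^+ c)) mulgK.
by rewrite groupM ?groupV.
Qed.

End Transvection.

(** * Bases with cyclic factors of orders p ^ k and p ^ k.+1 *)

Lemma abelian_structure_ord (gT : finGroupType) (G : {group gT}) : abelian G ->
  exists n (x : 'I_n -> gT),
    \big[dprod/1]_(i < n) <[x i]> = G /\ abelian_type G = [seq #[x i] | i : 'I_n].
Proof.
move=> cGG; have [b defG tG] := abelian_structure cGG.
exists (size b), (nth 1 b); split; first by rewrite -defG (big_nth 1) big_mkord.
by rewrite -tG -[in LHS](mkseq_nth 1 b) -map_comp /mkseq -val_enum_ord -map_comp.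
Qed.

Section CyclicBasis.

Variables (gT : finGroupType) (G : {group gT}) (n : nat) (x : 'I_n -> gT).
Hypotheses (cGG : abelian G) (defG : \big[dprod/1]_(i < n) <[x i]> = G).
Implicit Types i j : 'I_n.

Definition cobasis i : {group gT} := << \bigcup_(j | j != i) <[x j]> >>%G.

Lemma dprod_cobasis i : <[x i]> \x cobasis i = G.
Proof.
have := defG; rewrite (bigD1 i) //= => defG_i.
have [[_ B _ defB] _ _ _] := dprodP defG_i.
by rewrite /cobasis /= (bigdprodWY defB) -defB.
Qed.

Lemma basis_cycle_sub i : <[x i]> \subset G.
Proof. by have [_ /mulG_sub[]] := dprodP (dprod_cobasis i). Qed.

Lemma basis_expg_mem i e : x i ^+ e \in G.
Proof. by rewrite (subsetP (basis_cycle_sub i)) ?mem_cycle. Qed.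

Lemma cobasis_mem i j : j != i -> x j \in cobasis i.
Proof. by move=> ji; apply: mem_gen; apply/bigcupP; exists j; rewrite ?cycle_id. Qed.

Lemma prod_basisD1 (c : 'I_n -> gT) i : (forall j, c j \in <[x j]>) ->
  \prod_j c j = c i * \prod_(j | j != i) c j.
Proof.
move=> cx; apply: prodg_commD1 => j l; apply: (centsP cGG).
  exact: subsetP (basis_cycle_sub j) _ (cx j).
exact: subsetP (basis_cycle_sub l) _ (cx l).
Qed.

Lemma cobasis_prod (c : 'I_n -> gT) i : (forall j, c j \in <[x j]>) ->
  \prod_(j | j != i) c j \in cobasis i.
Proof. by move=> cx; apply: group_prod => j ji; apply: mem_gen; apply/bigcupP; exists j. Qed.

Lemma char_basis_shift (H : {group gT}) i j m c : H \char G ->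
  #[x j ^+ m] %| #[x i] -> x i ^+ c \in H -> (x j ^+ m) ^+ c \in H.
Proof.
move=> chH dv Hxc; have [-> | ji] := eqVneq j i.
  by rewrite -expgM mulnC expgM groupX.
apply: (char_transvection cGG (dprod_cobasis i) _ dv chH (group1 _)).
  by rewrite groupX // cobasis_mem.
by rewrite mulg1.
Qed.

Definition twinned i := [exists j, (j != i) && (#[x j] == #[x i])].

Lemma char_twin_component (H : {group gT}) i c w : H \char G -> twinned i ->
  w \in cobasis i -> x i ^+ c * w \in H -> x i ^+ c \in H.
Proof.
move=> chH /existsP[j /andP[ji /eqP oji]] Kw Hxw.
have dv : #[x j] %| #[x i] by rewrite oji.
have Hj := char_transvection cGG (dprod_cobasis i) (cobasis_mem ji) dv chH Kw Hxw.
have := @char_basis_shift H j i 1 c chH; rewrite expg1; apply => //.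
by rewrite oji.
Qed.

Variables (p k : nat).
Hypotheses (pr_p : prime p) (ox : forall i, #[x i] = (p ^ k)%N \/ #[x i] = (p ^ k.+1)%N).

Let pk_neq : (p ^ k != p ^ k.+1)%N.
Proof. by rewrite eqn_exp2l ?prime_gt1 // ltn_eqF. Qed.

Lemma basis_order_cases i j : #[x i] != #[x j] ->
    #[x i] = (p ^ k)%N /\ #[x j] = (p ^ k.+1)%N
  \/ #[x i] = (p ^ k.+1)%N /\ #[x j] = (p ^ k)%N.
Proof. by case: (ox i) (ox j) => -> [] ->; rewrite ?eqxx; auto. Qed.

Lemma char_cross_pair (H : {group gT}) i j c d : H \char G ->
  #[x i] = (p ^ k)%N -> #[x j] = (p ^ k.+1)%N ->
  x i ^+ c * x j ^+ d \in H -> x i ^+ c \in H /\ x j ^+ d \in H.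
Proof.
move=> chH oi oj Hcd.
have ji : j != i by apply: contra_neq pk_neq => eji; rewrite -oi -oj eji.
have dv_ji : #[x j ^+ p] %| #[x i] by rewrite (order_expg_pS pr_p oj) oi.
have Hj : (x j ^+ p) ^+ c \in H.
  apply: (char_transvection cGG (dprod_cobasis i) _ dv_ji chH _ Hcd).
    by rewrite groupX // cobasis_mem.
  by rewrite groupX // cobasis_mem.
have Hi : x i ^+ d \in H.
  have dv_ij : #[x i] %| #[x j] by rewrite oi oj dvdn_exp2l.
  apply: (char_transvection cGG (dprod_cobasis j) _ dv_ij chH _ (k := x i ^+ c)).
  - by rewrite cobasis_mem // eq_sym.
  - by rewrite groupX // cobasis_mem // eq_sym.
  by rewrite (centsP cGG _ (basis_expg_mem j d) _ (basis_expg_mem i c)).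
have [Hic | Hjd] := orP (cycleX_cross c d pr_p oi oj).
  have {}Hic : x i ^+ c \in H by apply: subsetP Hic; rewrite cycle_subG.
  by split; rewrite // -(groupMl _ Hic).
have {}Hjd : x j ^+ d \in H by apply: subsetP Hjd; rewrite cycle_subG expgM.
by split; rewrite // -(groupMr _ Hjd).
Qed.

Lemma untwinned_other i j l : j != i -> ~~ twinned i -> ~~ twinned j ->
  l != i -> l = j.
Proof.
move=> ji twi twj li; apply/eqP; move: twj; apply: contraNT => lj.
have [oij | noij] := eqVneq #[x i] #[x j].
  by apply/existsP; exists i; rewrite eq_sym ji oij eqxx.
have [olj | nolj] := eqVneq #[x l] #[x j].
  by apply/existsP; exists l; rewrite lj olj eqxx.
case/negP: twi; apply/existsP; exists l; rewrite li /=.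
by case: (basis_order_cases noij) nolj => -[-> ->]; case: (ox l) => ->; rewrite ?eqxx.
Qed.

Lemma char_basis_component (H : {group gT}) (c : 'I_n -> gT) : H \char G ->
  (forall j, c j \in <[x j]>) -> \prod_j c j \in H -> forall i, c i \in H.
Proof.
move=> chH cx Hc.
have twin_in i : twinned i -> c i \in H.
  move=> twi; move: Hc; rewrite (prod_basisD1 i cx).
  have /cycleP[e ->] := cx i.
  exact: char_twin_component chH twi (cobasis_prod i cx).
(* Either i has a twin, or every other index has one, or the basis consists of
   exactly two elements, of orders p ^ k and p ^ k.+1. *)
move=> i; have [twi | ntwi] := boolP (twinned i); first exact: twin_in.
have [twins | ] := boolP [forall (j | j != i), twinned j].
  move: Hc; rewrite (prod_basisD1 i cx) groupMr // group_prod // => j ji.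
  by apply: twin_in; apply: (forall_inP twins).
case/forall_inPn=> j; rewrite unfold_in => ji ntwj.
have noij : #[x i] != #[x j].
  by apply: contraNneq ntwi => oij; apply/existsP; exists j; rewrite ji oij eqxx.
move: Hc; rewrite (prod_basisD1 i cx) (big_pred1 j) => [|l]; last first.
  apply/idP/eqP => [li | ->]; [exact: untwinned_other ji ntwi ntwj li | exact: ji].
have /cycleP[a ->] := cx i; have /cycleP[b ->] := cx j.
case: (basis_order_cases noij) => -[oi oj] Hab; first by case: (char_cross_pair chH oi oj Hab).
rewrite (centsP cGG _ (basis_expg_mem i a) _ (basis_expg_mem j b)) in Hab.
by case: (char_cross_pair chH oj oi Hab).
Qed.

Lemma char_sub_basis (H K : {group gT}) : H \char G ->
  (forall i, H :&: <[x i]> \subset K) -> H \subset K.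
Proof.
move=> chH sHK; apply/subsetP=> h Hh.
have [c [cx defh _]] := mem_bigdprod defG (subsetP (char_sub chH) h Hh).
have {}cx j : c j \in <[x j]> by apply: cx.
rewrite defh group_prod // => i _; apply: (subsetP (sHK i)).
by rewrite inE cx (char_basis_component chH cx) -?defh.
Qed.

Lemma char_basis_cross (H K : {group gT}) i j c d : H \char G -> K \char G ->
    #[x i] = (p ^ k)%N -> #[x j] = (p ^ k.+1)%N ->
  x i ^+ c \in H -> x j ^+ d \in K -> (x i ^+ c \in K) || (x j ^+ d \in H).
Proof.
move=> chH chK oi oj Hi Kj.
have dv_ji : #[x j ^+ p] %| #[x i] by rewrite (order_expg_pS pr_p oj) oi.
have Hj := char_basis_shift chH dv_ji Hi; rewrite -expgM in Hj.
have Ki : (x i ^+ 1) ^+ d \in K.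
  by apply: char_basis_shift chK _ Kj; rewrite expg1 oi oj dvdn_exp2l.
rewrite expg1 in Ki; case/orP: (cycleX_cross c d pr_p oi oj).
  by move/(cycle_subG_mem Ki)->.
by move/(cycle_subG_mem Hj)->; rewrite orbT.
Qed.

Lemma char_basis_pair (H K : {group gT}) i j c d : H \char G -> K \char G ->
  x i ^+ c \in H -> x j ^+ d \in K -> (x i ^+ c \in K) || (x j ^+ d \in H).
Proof.
move=> chH chK Hi Kj; have [oij | noij] := eqVneq #[x i] #[x j]; last first.
  case: (basis_order_cases noij) => -[oi oj]; first exact: char_basis_cross.
  by rewrite orbC; apply: char_basis_cross.
have Hj : (x j ^+ 1) ^+ c \in H by apply: char_basis_shift chH _ Hi; rewrite expg1 oij.
have Ki : (x i ^+ 1) ^+ d \in K by apply: char_basis_shift chK _ Kj; rewrite expg1 oij.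
have [a oi] : exists a, #[x i] = (p ^ a)%N by case: (ox i); eauto.
rewrite !expg1 in Hj Ki; case/orP: (cycleX_total c d pr_p oi (etrans (esym oij) oi)).
  by move/(cycle_subG_mem Ki)->.
by move/(cycle_subG_mem Hj)->; rewrite orbT.
Qed.

Lemma char_chain_basis : char_chain G.
Proof.
move=> H K chH chK.
have [sHK | /forallPn[i /subsetPn[u /setIP[Hu /cycleP[c defu]] nKu]]] :=
  boolP [forall i, H :&: <[x i]> \subset K].
  by rewrite (char_sub_basis chH) // => i; apply: (forallP sHK).
have [sKH | /forallPn[j /subsetPn[w /setIP[Kw /cycleP[d defw]] nHw]]] :=
  boolP [forall j, K :&: <[x j]> \subset H].
  by rewrite (char_sub_basis chK) ?orbT // => j; apply: (forallP sKH).
rewrite defu in Hu nKu; rewrite defw in Kw nHw.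
by have := char_basis_pair chH chK Hu Kw; rewrite (negPf nKu) (negPf nHw).
Qed.

End CyclicBasis.

(** * The abelian type of ZZtype *)

Section RowZp.

Import GRing.Theory.

Variables (N mu : nat).
Local Notation V := 'rV['I_N.+1]_mu.

Lemma row_Zp_expg (u : V) : u ^+ N.+1 = 1.
Proof.
rewrite FinRing.zmodXgE; apply/matrixP=> i j; rewrite mulmxnE !mxE.
by apply: val_inj; rewrite Zp_mulrn /= modnMl.
Qed.

Lemma card_row_Zp : #|[set: V]| = (N.+1 ^ mu)%N.
Proof. by rewrite cardsT card_mx card_ord mul1n. Qed.

Lemma rank_row_Zp : 'r([set: V]) <= mu.
Proof.
pose e i : V := (\row_j (if j == i then inZp 1 else 0))%R.
have genT : [set: V] = << [set e i | i : 'I_mu] >>.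
  apply/eqP; rewrite eqEsubset subsetT andbT; apply/subsetP=> u _.
  have -> : u = (\sum_(i < mu) e i *+ u ord0 i)%R.
    apply/matrixP=> a j; rewrite ord1 summxE (bigD1 j) //= big1 => [|i ij].
      rewrite mulmxnE mxE !eqxx addr0; apply: val_inj.
      by rewrite Zp_mulrn /= modnMml mul1n modn_small.
    by rewrite mulmxnE mxE eq_sym (negPf ij) mul0rn.
  apply: (big_ind (fun v : V => v \in << _ >>)) => [|v w|i _]; first exact: group1.
    exact: groupM.
  by rewrite -FinRing.zmodXgE groupX // mem_gen // imset_f.
rewrite -grank_abelian ?FinRing.zmod_abelian //.
have := grank_min [set e i | i : 'I_mu]; rewrite -genT => /leq_trans; apply.
by rewrite (leq_trans (leq_imset_card _ _)) ?card_ord.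
Qed.

End RowZp.

Lemma abelian_type_pfactor_card (gT : finGroupType) (R : {group gT}) p a mu :
    prime p -> abelian R -> #|R| = (p ^ (a * mu))%N -> exponent R %| (p ^ a)%N ->
    'r(R) <= mu ->
  abelian_type R = nseq (if a is 0 then 0 else mu) (p ^ a)%N.
Proof.
move=> pr_p cRR oR dv_eR rR; have p_gt1 := prime_gt1 pr_p.
have [a' le_a'a eR] := dvdn_pfactor _ _ pr_p dv_eR.
have [le_R_eR homR] := max_card_abelian cRR.
have eq_aa' : (a * mu = a' * 'r(R))%N.
  apply/eqP; rewrite eqn_leq -(leq_exp2l _ _ p_gt1) -oR expnM -eR le_R_eR.
  exact: leq_mul.
have {}homR : homocyclic R by rewrite -homR eR -expnM -eq_aa' oR.
rewrite (abelian_type_homocyclic homR) eR.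
case: a => [|a] in oR dv_eR le_a'a eq_aa' *.
  move: le_a'a; rewrite leqn0 => /eqP a'0; have := abelian_type_gt1 R.
  by rewrite (abelian_type_homocyclic homR) eR a'0; case: 'r(R).
case: mu => [|mu] in oR rR eq_aa' *; first by move: rR; rewrite leqn0 => /eqP->.
by have [-> ->] : 'r(R) = mu.+1 /\ a' = a.+1 by split; nia.
Qed.

Lemma abelian_type_row_pfactor p a mu : prime p ->
  abelian_type [set: 'rV['I_(p ^ a).-1.+1]_mu] = nseq (if a is 0 then 0 else mu) (p ^ a)%N.
Proof.
move=> pr_p; have Npa : (p ^ a).-1.+1 = (p ^ a)%N by rewrite prednK ?expn_gt0 ?prime_gt0.
apply: abelian_type_pfactor_card => //.
- exact: FinRing.zmod_abelian.
- by rewrite card_row_Zp Npa expnM.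
- by apply/exponentP=> u _; rewrite -(row_Zp_expg u) Npa.
exact: rank_row_Zp.
Qed.

Lemma abelian_ZZtype p k mu1 mu2 : abelian [set: ZZtype p k mu1 mu2].
Proof. by apply/centsP=> u _ v _; congr (_, _); apply: GRing.addrC. Qed.

Lemma abelian_type_ZZtype p k mu1 mu2 : prime p ->
  perm_eq (abelian_type [set: ZZtype p k mu1 mu2])
          (nseq (if k is 0 then 0 else mu1) (p ^ k)%N ++ nseq mu2 (p ^ k.+1)%N).
Proof.
move=> pr_p; set T1 := 'rV['I_(p ^ k).-1.+1]_mu1; set T2 := 'rV['I_(p ^ k.+1).-1.+1]_mu2.
pose A1 := setX [set: T1] (1 : {set T2}); pose A2 := setX (1 : {set T1}) [set: T2].
have isoA1 : [set: T1]%G \isog [group of A1] := isog_setX1 T2 [set: T1]%G.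
have isoA2 : [set: T2]%G \isog [group of A2] := isog_set1X T1 [set: T2]%G.
have cA1 : abelian A1 by rewrite -(isog_abelian isoA1) FinRing.zmod_abelian.
have cA2 : abelian A2 by rewrite -(isog_abelian isoA2) FinRing.zmod_abelian.
have [b1 defA1 tA1] := abelian_structure cA1.
have [b2 defA2 tA2] := abelian_structure cA2.
have defZZ : \big[dprod/1]_(z <- b1 ++ b2) <[z]> = [set: ZZtype p k mu1 mu2].
  by rewrite big_cat /= defA1 defA2 setX_dprod; apply/setP=> -[u v]; rewrite !inE.
have pZZ : p.-group [set: ZZtype p k mu1 mu2].
  rewrite /pgroup cardsT card_prod !card_mx !card_ord !prednK ?expn_gt0 ?prime_gt0 //.
  by rewrite pnatM !pnatX !pnat_id.
have ntb : 1 \notin b1 ++ b2.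
  apply/negP; have := abelian_type_gt1 A1; have := abelian_type_gt1 A2.
  rewrite -tA1 -tA2 => /allP t2 /allP t1; rewrite mem_cat.
  by case/orP=> /(map_f order) /= => [/t1 | /t2]; rewrite order1.
have := abelian_type_pgroup pZZ defZZ ntb.
by rewrite map_cat tA1 tA2 -(isog_abelian_type isoA1) -(isog_abelian_type isoA2) !abelian_type_row_pfactor.
Qed.

Lemma perm_nseq_count2 (T : eqType) (s : seq T) u v :
  u != v -> {subset s <= [:: u; v]} ->
  perm_eq s (nseq (count_mem u s) u ++ nseq (count_mem v s) v).
Proof.
move=> uv; elim: s => //= t s IH suv.
have {}IH : perm_eq s _ := IH (fun z zs => suv z (mem_behead (s := t :: s) zs)).
have := suv t (mem_head t s); rewrite !inE => /orP[] /eqP->.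
  by rewrite eqxx (negPf uv) /= perm_cons.
rewrite eqxx eq_sym (negPf uv) /=.
by rewrite -[_ :: nseq _ v]cat1s perm_sym perm_catCA /= perm_cons perm_sym.
Qed.

Lemma isog_ZZtype (gT : finGroupType) (G : {group gT}) p k : prime p -> abelian G ->
    {subset abelian_type G <= [:: p ^ k; p ^ k.+1]%N} ->
  G \isog [set: ZZtype p k (count_mem (p ^ k)%N (abelian_type G))
                           (count_mem (p ^ k.+1)%N (abelian_type G))].
Proof.
move=> pr_p cGG tG; rewrite eq_abelian_type_isog ?abelian_ZZtype //; apply/eqP.
have pk_neq : (p ^ k != p ^ k.+1)%N by rewrite eqn_exp2l ?prime_gt1 // ltn_eqF.
have mu1 : (if k is 0 then 0 else count_mem (p ^ k)%N (abelian_type G))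
             = count_mem (p ^ k)%N (abelian_type G).
  case: k {tG pk_neq} => //; apply/esym/count_memPn; rewrite expn0.
  by apply: contraTN (abelian_type_gt1 G) => t1; apply/allPn; exists 1%N.
apply: (sorted_eq (leT := geq)); rewrite ?abelian_type_sorted //.
- by move=> y z t /= le_zy le_tz; apply: leq_trans le_tz le_zy.
- by move=> y z /= /andP[le_zy le_yz]; apply/eqP; rewrite eqn_leq le_zy le_yz.
apply: perm_trans (perm_nseq_count2 pk_neq tG) _.
have := abelian_type_ZZtype k (count_mem (p ^ k)%N (abelian_type G))
  (count_mem (p ^ k.+1)%N (abelian_type G)) pr_p.
by rewrite mu1 perm_sym.
Qed.

Lemma isog_ZZtype_char_chain (gT : finGroupType) (G : {group gT}) p k mu1 mu2 :
  prime p -> abelian G -> G \isog [set: ZZtype p k mu1 mu2] -> char_chain G.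
Proof.
move=> pr_p cGG isoG; have [n [x [defG tG]]] := abelian_structure_ord cGG.
apply: (char_chain_basis cGG defG pr_p) => i.
have : #[x i] \in abelian_type [set: ZZtype p k mu1 mu2].
  by rewrite -(isog_abelian_type isoG) tG (image_f (fun j => #[x j])).
rewrite (perm_mem (abelian_type_ZZtype _ _ _ pr_p)) mem_cat !mem_nseq.
by case/orP=> /andP[_ /eqP->]; [left | right].
Qed.

(** * Abelian groups whose characteristic subgroups form a chain *)

Lemma char_chain_pgroup (gT : finGroupType) (G : {group gT}) :
  abelian G -> char_chain G -> exists2 p, prime p & p.-group G.
Proof.
move=> cGG chG; have [-> | ntG] := eqsVneq G 1; first by exists 2; rewrite ?pgroup1.
have pr_p : prime (pdiv #|G|) by rewrite pdiv_prime // cardG_gt1.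
exists (pdiv #|G|) => //; set p := pdiv #|G|; apply/pgroupP=> q pr_q qG.
have Opq (r : nat) : prime r -> r %| #|G| -> exists2 y, y \in 'O_r(G) & #[y] = r.
  move=> pr_r rG; have [y Gy oy] := Cauchy pr_r rG; exists y => //.
  rewrite -cycle_subG pcore_max ?/pgroup -?orderE ?oy ?pnat_id //.
  by rewrite -sub_abelian_normal // cycle_subG.
have [y Oy oy] := Opq p pr_p (pdiv_dvd _); have [z Oz oz] := Opq q pr_q qG.
case/orP: (chG _ _ (pcore_char p G) (pcore_char q G)) => sOpq.
  have := mem_p_elt (pcore_pgroup q G) (subsetP sOpq _ Oy).
  by rewrite /p_elt oy pnatE // !inE eq_sym.
have := mem_p_elt (pcore_pgroup p G) (subsetP sOpq _ Oz).
by rewrite /p_elt oz pnatE.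
Qed.

Lemma dprod_cycle_notin_Mho1 (gT : finGroupType) (G K : {group gT}) (p : nat) y :
  p.-group G -> abelian G -> <[y]> \x K = G -> y != 1 -> y \notin 'Mho^1(G).
Proof.
move=> pG cGG defG nty; rewrite (MhoEabelian 1 pG cGG); apply/imsetP=> -[z Gz yz].
have [_ /mulG_sub[syG sKG] _ tiyK] := dprodP defG.
have [_ [w [/cycleP[c ->] Kw defz _]]] := mem_dprod defG Gz.
have cyw : commute (y ^+ c) w.
  exact: centsP cGG _ (subsetP syG _ (mem_cycle y c)) _ (subsetP sKG _ Kw).
rewrite defz (expgMn _ cyw) -expgM expn1 in yz.
have wp1 : w ^+ p = 1.
  apply/set1gP; rewrite -tiyK inE (groupX _ Kw) andbT.
  by rewrite -(mulKg (y ^+ (c * p)) (w ^+ p)) -yz groupM ?groupV ?mem_cycle ?cycle_id.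
have nty1 : <[y]> != 1 :> {set gT} by rewrite cycle_eq1.
have [pr_p p_dv_y _] := pgroup_pdiv (pgroupS syG pG) nty1.
rewrite wp1 mulg1 -{1}(expg1 y) in yz; move/eqP: yz.
rewrite eq_expg_mod_order => /eqP/(congr1 (modn^~ p)) /=.
by rewrite !modn_dvdm ?orderE // modnMl modn_small ?prime_gt1.
Qed.

Section CharChainPGroup.

Variables (gT : finGroupType) (G : {group gT}) (p : nat).
Hypotheses (pr_p : prime p) (pG : p.-group G) (cGG : abelian G) (chG : char_chain G).

Let e := logn p (exponent G).

Let exponent_pfactor : exponent G = (p ^ e)%N.
Proof. by rewrite -p_part part_pnat_id // (pnat_exponent p G). Qed.

Lemma char_chain_Ohm_sub_Mho1 : 'Ohm_(e - 2)(G) \subset 'Mho^1(G).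
Proof.
have [le_e1 | lt1e] := leqP e 1.
  by rewrite (eqP (_ : e - 2 == 0)) ?Ohm0 ?sub1G // subn_eq0 (leq_trans le_e1).
case/orP: (chG (Ohm_char (e - 2) G) (Mho_char 1 G)) => // sMO; exfalso.
have [x Gx ox] := exponent_witness (abelian_nil cGG).
have : x ^+ (p ^ 1) \in 'Ohm_(e - 2)(G).
  by rewrite (subsetP sMO) ?Mho_p_elt ?(mem_p_elt pG).
rewrite (OhmEabelian pG (abelianS (Ohm_sub _ _) cGG)) !inE -expgM -order_dvdn.
rewrite -ox exponent_pfactor -expnD dvdn_Pexp2l ?prime_gt1 // andbC.
by case/andP; lia.
Qed.

Lemma char_chain_dprod_cycle_order (K : {group gT}) y : <[y]> \x K = G -> y != 1 ->
  #[y] \in [:: p ^ e.-1; p ^ e.-1.+1]%N.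
Proof.
move=> defG nty; have [_ /mulG_sub[syG _] _ _] := dprodP defG.
have Gy : y \in G by rewrite -cycle_subG.
have dv_y : #[y] %| (p ^ e)%N by rewrite -exponent_pfactor dvdn_exponent.
have [a le_ae oy] := dvdn_pfactor _ _ pr_p dv_y.
have a_gt0 : 0 < a by rewrite lt0n; apply: contraNneq nty => a0; rewrite -order_eq1 oy a0.
have le_e1a : e.-1 <= a.
  rewrite leqNgt; apply: contra (dprod_cycle_notin_Mho1 pG cGG defG nty) => lt_ae1.
  rewrite (subsetP char_chain_Ohm_sub_Mho1) // (OhmEabelian pG (abelianS (Ohm_sub _ _) cGG)).
  by rewrite !inE Gy -order_dvdn oy dvdn_exp2l //; lia.
by rewrite !inE oy !eqn_exp2l ?prime_gt1 //; apply/orP; lia.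
Qed.

Lemma char_chain_abelian_type : {subset abelian_type G <= [:: p ^ e.-1; p ^ e.-1.+1]%N}.
Proof.
have [n [x [defG tG]]] := abelian_structure_ord cGG.
have := abelian_type_gt1 G; rewrite tG => /allP ntx t /imageP[i _ ->].
apply: char_chain_dprod_cycle_order (dprod_cobasis defG i) _.
by rewrite -order_gt1; apply: ntx; rewrite (image_f (fun j => #[x j])).
Qed.

End CharChainPGroup.

Theorem mainTheorem9 (gT : finGroupType) (G : {group gT}) (abG : abelian G) :
  char_chain G <->
  exists p k mu1 mu2 : nat,
    prime p /\ G \isog [set: ZZtype p k mu1 mu2].
Proof.
split=> [chG | [p [k [mu1 [mu2 [pr_p isoG]]]]]]; last first.
  exact: isog_ZZtype_char_chain pr_p abG isoG.
have [p pr_p pG] := char_chain_pgroup abG chG.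
have isoG := isog_ZZtype pr_p abG (char_chain_abelian_type pr_p pG abG chG).
by exists p; do 3!eexists; split; last exact: isoG.
Qed.
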